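(* Let $a_1,\dots,a_n$ be pairwise coprime positive integers, $n>2$, and let $P=\prod_{i=1}^na_i$. Then the numerical semigroup $H=\langle P/a_1,\dots,P/a_n\rangle$ is a complete intersection semigroup which is not quadratic.
   Context: For a numerical semigroup $H$ with minimal generating set $\{g_1,\dots,g_m\}$ and a field $K$, $I_H=\ker(K[x_1,\dots,x_m]\to K[t],\ x_i\mapsto t^{g_i})$; $H$ is a complete intersection semigroup if $I_H$ is minimally generated by $\operatorname{height}I_H$ elements. For $f\neq0$, $f^*$ is its lowest-degree homogeneous component, $I_H^*=(f^*:0\neq f\in I_H)$; $H$ is quadratic if $I_H^*$ is generated by homogeneous polynomials of degree 2. *)

From mathcomp Require Import all_boot all_order all_algebra.
From mathcomp Require Import mpoly.
Set Implicit Arguments. Unset Strict Implicit. Unset Printing Implicit Defensive.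
Import GRing.Theory.
Local Open Scope ring_scope.

Section Defs.
Context (K : fieldType) (m : nat).
Local Notation R := {mpoly K[m]}.

Definition gen_ideal (S : R -> Prop) : R -> Prop :=
  fun p => exists (s : seq R) (c : seq R),
    (forall q, q \in s -> S q) /\ size c = size s /\
    p = \sum_(i < size s) c`_i * s`_i.

Definition generates (S I : R -> Prop) : Prop :=
  forall p, gen_ideal S p <-> I p.

Definition is_ideal (I : R -> Prop) : Prop :=
  I 0 /\ (forall p q, I p -> I q -> I (p + q)) /\
  (forall a p, I p -> I (a * p)).

Definition is_prime (P : R -> Prop) : Prop :=
  is_ideal P /\ ~ P 1 /\ (forall a b, P (a * b) -> P a \/ P b).

Definition strict_subset (A B : R -> Prop) : Prop :=
  (forall p, A p -> B p) /\ exists p, B p /\ ~ A p.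

Definition ht_ge (P : R -> Prop) (k : nat) : Prop :=
  exists C : nat -> (R -> Prop),
    (forall i, (i <= k)%N -> is_prime (C i)) /\
    (forall i, (i < k)%N -> strict_subset (C i) (C i.+1)) /\
    (forall p, C k p <-> P p).

Definition prime_height (P : R -> Prop) (h : nat) : Prop :=
  ht_ge P h /\ ~ ht_ge P h.+1.

Definition ideal_height (I : R -> Prop) (h : nat) : Prop :=
  (exists P, is_prime P /\ (forall p, I p -> P p) /\ prime_height P h) /\
  (forall P, is_prime P -> (forall p, I p -> P p) -> ht_ge P h).

Definition min_num_gens (I : R -> Prop) (mu : nat) : Prop :=
  (exists s : seq R, size s = mu /\ generates (fun q => q \in s) I) /\
  (forall s : seq R, generates (fun q => q \in s) I -> (mu <= size s)%N).

Definition semigroup_ideal (g : 'I_m -> nat) : R -> Prop :=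
  fun p => mmap (@polyC K) (fun i => 'X^(g i) : {poly K}) p = 0.

(* lowest total degree of a monomial of p (for p <> 0) *)
Definition low_deg (p : R) : nat :=
  foldr minn (msize p) [seq mdeg mm | mm <- msupp p].

Definition initial_form (p : R) : R :=
  \sum_(mm <- msupp p | mdeg mm == low_deg p) p@_mm *: 'X_[mm].

Definition initial_ideal (g : 'I_m -> nat) : R -> Prop :=
  gen_ideal (fun q => exists f, semigroup_ideal g f /\ f <> 0 /\ q = initial_form f).

Definition complete_intersection (g : 'I_m -> nat) : Prop :=
  exists h, ideal_height (semigroup_ideal g) h /\
            min_num_gens (semigroup_ideal g) h.

Definition quadratic (g : 'I_m -> nat) : Prop :=
  exists S : R -> Prop, (forall q, S q -> q \is 2.-homog) /\
    generates S (initial_ideal g).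

End Defs.

Definition in_semigroup (m : nat) (g : 'I_m -> nat) (x : nat) : Prop :=
  exists c : 'I_m -> nat, x = (\sum_(i < m) c i * g i)%N.

(* g is the minimal generating set (listed without repetition) of <g>,
   which is a numerical semigroup (gcd 1) *)
Definition minimal_generating_system (m : nat) (g : 'I_m -> nat) : Prop :=
  injective g /\ (forall i, 0 < g i)%N /\
  (\big[gcdn/0]_(i < m) g i = 1)%N /\
  (forall i, ~ exists c : 'I_m -> nat, c i = 0%N /\ g i = (\sum_(j < m) c j * g j)%N).

From mathcomp Require Import all_boot all_order all_algebra.
From mathcomp Require Import mpoly.
From mathcomp Require Import zify.
Set Implicit Arguments. Unset Strict Implicit. Unset Printing Implicit Defensive.

(* Give [x_i] the weight [g_i = P / a_i], so that [I_H] is the kernel of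
   [x_i |-> t ^ g_i]. As [a_i] divides [g_j] for [j != i] and is coprime to [g_i],
   the weight of a monomial determines its exponents modulo every [a_i]; hence
   distinct monomials of equal weight have weight at least [P], and every element
   of [I_H] only involves monomials of weight at least [P].
   Reducing exponents modulo the binomials [x_j ^ a_j - x_n ^ a_n] (j < n) leaves
   monomials determined by their weight, so these [n - 1] binomials generate [I_H];
   no fewer elements do, because the coefficients at the weight-[P] monomials
   [x_j ^ a_j] of an element of [I_H] depend linearly on the constant terms of the
   multipliers. The height of [I_H] is [n - 1]: partial substitutions give a chain
   of [n] primes ending at [I_H], which the maximal ideal at the origin extends,
   and prime chains in [n] variables have at most [n + 1] members.
   If [3 <= a_i < a_j], then [x_i ^ a_i] is the initial form of
   [x_i ^ a_i - x_j ^ a_j], whereas a quadratic form in [I_H^*] could only produce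
   it from [x_i ^ 2], of weight [2 g_i < P]. *)

Section WeightedDegree.
Variables (n : nat) (g : 'I_n -> nat).

Definition wdeg (m : 'X_{1..n}) : nat := \sum_(i < n) m i * g i.

Lemma wdeg0 : wdeg 0%MM = 0.
Proof. by rewrite /wdeg big1 // => i _; rewrite mnm0E. Qed.

Lemma wdegD (m1 m2 : 'X_{1..n}) : wdeg (m1 + m2)%MM = wdeg m1 + wdeg m2.
Proof.
by rewrite /wdeg -big_split /=; apply: eq_bigr => i _; rewrite mnmDE mulnDl.
Qed.

Lemma wdeg_sum (I : Type) (r : seq I) (F : I -> 'X_{1..n}) :
  wdeg (\sum_(i <- r) F i)%MM = \sum_(i <- r) wdeg (F i).
Proof.
elim: r => [|x r IHr]; first by rewrite !big_nil wdeg0.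
by rewrite !big_cons wdegD IHr.
Qed.

Lemma wdegMn (m : 'X_{1..n}) k : wdeg (m *+ k)%MM = wdeg m * k.
Proof.
by rewrite /wdeg big_distrl /=; apply: eq_bigr => i _; rewrite mulmnE mulnAC.
Qed.

Lemma wdegU i : wdeg U_(i)%MM = g i.
Proof.
rewrite /wdeg (bigD1 i) //= mnm1E eqxx mul1n big1 ?addn0 // => j ji.
by rewrite mnm1E eq_sym (negPf ji).
Qed.

Lemma leq_wdeg (m : 'X_{1..n}) i : m i * g i <= wdeg m.
Proof. by rewrite /wdeg (bigD1 i) //= leq_addr. Qed.

Lemma wdeg_eq0 (m : 'X_{1..n}) : (forall i, 0 < g i) -> wdeg m = 0 -> m = 0%MM.
Proof.
move=> g_gt0 m0; apply/mnmP => i; rewrite mnm0E.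
by have := leq_wdeg m i; rewrite m0 leqn0 muln_eq0 [g i == 0]eqn0Ngt g_gt0 orbF => /eqP.
Qed.

End WeightedDegree.

Section Generators.
Variables (n : nat) (a : 'I_n -> nat).
Hypothesis a_gt1 : forall i, 1 < a i.
Hypothesis a_coprime : forall i j, i != j -> coprime (a i) (a j).

Definition prodA : nat := \prod_(i < n) a i.
Definition sgen (i : 'I_n) : nat := prodA %/ a i.

Lemma a_gt0 i : 0 < a i.
Proof. exact: leq_trans (a_gt1 i). Qed.

Lemma a_inj : injective a.
Proof.
move=> i j aij; apply/eqP; apply: contraTT isT => ij.
by have := a_coprime ij; rewrite aij /coprime gcdnn => /eqP aj1; have := a_gt1 j; rewrite aj1.
Qed.

Lemma sgenE i : sgen i = \prod_(j < n | j != i) a j.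
Proof. by rewrite /sgen /prodA (bigD1 i) //= mulKn ?a_gt0. Qed.

Lemma mul_a_sgen i : a i * sgen i = prodA.
Proof. by rewrite sgenE /prodA [in RHS](bigD1 i). Qed.

Lemma sgen_gt0 i : 0 < sgen i.
Proof. by rewrite sgenE prodn_gt0 // => j; apply: a_gt0. Qed.

Lemma dvdn_a_sgen i j : i != j -> a i %| sgen j.
Proof. by move=> ij; rewrite sgenE (bigD1 i) //= dvdn_mulr. Qed.

Lemma coprime_sgen_a i : coprime (sgen i) (a i).
Proof.
rewrite sgenE; apply: (big_ind (coprime^~ (a i))) => [|x y|j ji].
- exact: coprime1n.
- by rewrite coprimeMl => -> ->.
- exact: a_coprime.
Qed.

Lemma a_ndvd_sgen i : ~~ (a i %| sgen i).
Proof.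
apply/negP => /gcdn_idPr ai_gcd.
by have := coprime_sgen_a i; rewrite /coprime ai_gcd => /eqP ai1; have := a_gt1 i; rewrite ai1.
Qed.

Local Notation w := (wdeg sgen).

Lemma wdeg_mod_a (u : 'X_{1..n}) k : w u = u k * sgen k %[mod a k].
Proof.
rewrite /wdeg (bigD1 k) //=.
have /dvdnP[q ->] : a k %| \sum_(j < n | j != k) u j * sgen j.
  by apply/dvdn_sum => j jk; apply/dvdn_mull/dvdn_a_sgen; rewrite eq_sym.
by rewrite addnC modnMDl.
Qed.

Lemma eq_wdeg_mod_a (u v : 'X_{1..n}) k : w u = w v -> u k = v k %[mod a k].
Proof.
move=> uv; have : u k * sgen k = v k * sgen k %[mod a k] by rewrite -!wdeg_mod_a uv.
wlog le_uv : u v {uv} / u k <= v k.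
  move=> W e; have [le|/ltnW le] := leqP (u k) (v k); first exact: W.
  exact/esym/(W v u le)/esym.
move/eqP; rewrite eq_sym eqn_mod_dvd ?leq_mul2r ?le_uv ?orbT // -mulnBl.
by rewrite Gauss_dvdl 1?coprime_sym ?coprime_sgen_a // -eqn_mod_dvd // eq_sym => /eqP.
Qed.

Lemma wdeg_collision (u v : 'X_{1..n}) : w u = w v -> u != v -> prodA <= w u.
Proof.
move=> uv; apply: contraNT; rewrite -ltnNge => lt_u; apply/eqP/mnmP => k.
have small (x : 'X_{1..n}) : w x < prodA -> x k < a k.
  move=> lt_x; rewrite -(ltn_pmul2r (sgen_gt0 k)) mul_a_sgen.
  exact: leq_ltn_trans (leq_wdeg _ x k) lt_x.
by have := eq_wdeg_mod_a k uv; rewrite !modn_small ?small // -uv.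
Qed.

Lemma sgen_inj : injective sgen.
Proof.
move=> i j sij; apply/eqP; apply: contraT => ij.
by have := dvdn_a_sgen ij; rewrite -sij (negPf (a_ndvd_sgen i)).
Qed.

Lemma biggcd_sgen : 0 < n -> \big[gcdn/0]_(i < n) sgen i = 1.
Proof.
move=> n_gt0; set d := \big[gcdn/0]_(i < n) sgen i.
have d_sgen i : d %| sgen i by apply/(dvdn_biggcdP _ _ _ (dvdnn d)).
have coprime_d j : coprime d (a j) := coprime_dvdl (d_sgen j) (coprime_sgen_a j).
have : coprime d (sgen (Ordinal n_gt0)).
  rewrite sgenE; apply: (big_ind (coprime d)) => // [|x y]; first exact: coprimen1.
  by rewrite coprimeMr => -> ->.
by rewrite /coprime (gcdn_idPl (d_sgen _)) => /eqP.
Qed.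

Lemma sgen_not_combination i (c : 'I_n -> nat) :
  c i = 0 -> sgen i != \sum_(j < n) c j * sgen j.
Proof.
move=> ci0; apply: contra (a_ndvd_sgen i) => /eqP ->.
apply: dvdn_sum => j _; case: (eqVneq j i) => [->|ji]; first by rewrite ci0.
by apply/dvdn_mull/dvdn_a_sgen; rewrite eq_sym.
Qed.

Lemma minimal_generating_system_sgen : 0 < n -> minimal_generating_system sgen.
Proof.
move=> n_gt0; split; [exact: sgen_inj|split; [exact: sgen_gt0|split]].
  exact: biggcd_sgen.
by move=> i [c [ci0 /eqP]]; apply/negP/sgen_not_combination.
Qed.

Lemma exists_a_ge3_lt : 2 < n -> exists i j, 3 <= a i < a j.
Proof.
move=> n_gt2; have [j _ a_max] := arg_maxnP a (isT : predT (Ordinal n_gt2)).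
have lt_max i : i != j -> a i < a j.
  move=> ij; have : a i <= a j := a_max i isT; rewrite leq_eqVlt => /orP[/eqP/a_inj eq_ij|//].
  by rewrite eq_ij eqxx in ij.
have [i1 [i2 [i12 i1j i2j]]] : exists i1 i2 : 'I_n, [/\ i1 != i2, i1 != j & i2 != j].
  pose o0 := Ordinal (ltnW (ltnW n_gt2)); pose o1 := Ordinal (ltnW n_gt2).
  pose o2 := Ordinal n_gt2.
  case: (eqVneq j o0) => [->|j0]; first by exists o1, o2.
  case: (eqVneq j o1) => [->|j1]; first by exists o0, o2.
  by exists o0, o1; rewrite ![_ == j]eq_sym.
case: (leqP 3 (a i1)) => [a1_ge3|a1_lt3]; first by exists i1, j; rewrite a1_ge3 lt_max.
exists i2, j; rewrite lt_max // andbT leqNgt; apply: contra i12 => a2_lt3.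
by apply/eqP/a_inj; have := a_gt1 i1; have := a_gt1 i2; lia.
Qed.

End Generators.

Import GRing.Theory.
Local Open Scope ring_scope.

Section Ideals.
Variables (K : fieldType) (n : nat).
Local Notation R := {mpoly K[n]}.

Lemma is_prime_kernel (S : idomainType) (f : {rmorphism R -> S}) :
  is_prime (fun p => f p = 0).
Proof.
split; [split; [|split]|split].
- exact: rmorph0.
- by move=> p q fp fq; rewrite rmorphD fp fq addr0.
- by move=> c p fp; rewrite rmorphM fp mulr0.
- by rewrite rmorph1 => /eqP; rewrite oner_eq0.
- by move=> p q /eqP; rewrite rmorphM mulf_eq0 => /orP[] /eqP; [left|right].
Qed.

Lemma ideal_sum (I : R -> Prop) (J : Type) (r : seq J) (F : J -> R) :
  is_ideal I -> (forall j, I (F j)) -> I (\sum_(j <- r) F j).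
Proof.
move=> [I0 [ID _]] IF; elim: r => [|x r IHr]; first by rewrite big_nil.
by rewrite big_cons; apply: ID.
Qed.

Lemma gen_ideal_min (S I : R -> Prop) :
  is_ideal I -> (forall q, S q -> I q) -> forall p, gen_ideal S p -> I p.
Proof.
move=> idI SI p [s [c [sS [_ ->]]]].
rewrite -(big_mkord xpredT (fun i => c`_i * s`_i)); apply: ideal_sum => // i.
have [_ [_ IM]] := idI; apply: IM.
have [i_lt|i_ge] := ltnP i (size s); first exact/SI/sS/mem_nth.
by rewrite nth_default //; case: idI.
Qed.

Lemma gen_ideal_comb (S : R -> Prop) k (F G : 'I_k -> R) :
  (forall j, S (F j)) -> gen_ideal S (\sum_(j < k) G j * F j).
Proof.
move=> SF; exists [seq F j | j <- enum 'I_k], [seq G j | j <- enum 'I_k].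
split; first by move=> q /mapP[j _ ->].
rewrite !size_map; split=> //.
rewrite -(big_mkord xpredT (fun i => _`_i * _`_i)) -enumT size_enum_ord big_mkord.
by apply: eq_bigr => j _; rewrite !(nth_map j) -?enumT ?size_enum_ord // nth_ord_enum.
Qed.

Lemma gen_ideal_mem (S : R -> Prop) q : S q -> gen_ideal S q.
Proof.
move=> Sq; have := @gen_ideal_comb S 1 (fun=> q) (fun=> 1) (fun=> Sq).
by rewrite big_ord1 mul1r.
Qed.

Lemma low_deg_le (p : R) m : m \in msupp p -> (low_deg p <= mdeg m)%N.
Proof.
rewrite /low_deg; elim: (msupp p) => [|x s IHs] //=.
by rewrite inE => /predU1P[->|/IHs]; [exact: geq_minl|rewrite geq_min => ->; rewrite orbT].
Qed.

Lemma low_deg_ge (p : R) b : (b <= msize p)%N ->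
  (forall m, m \in msupp p -> (b <= mdeg m)%N) -> (b <= low_deg p)%N.
Proof.
rewrite /low_deg => b_le; elim: (msupp p) => [|x s IHs] //= b_supp.
by rewrite leq_min b_supp ?mem_head // IHs // => m ms; rewrite b_supp // inE ms orbT.
Qed.

Lemma mcoeff_initial_form (p : R) m :
  (initial_form p)@_m = if mdeg m == low_deg p then p@_m else 0.
Proof.
rewrite /initial_form raddf_sum /= big_mkcond /=.
under eq_bigr do rewrite mcoeffZ mcoeffX.
have [mp|mNp] := boolP (m \in msupp p).
  rewrite (bigD1_seq m) ?msupp_uniq //= eqxx mulr1 big1 ?addr0 //.
  by move=> x; rewrite eq_sym => /negPf ->; rewrite mulr0; case: ifP.
rewrite big1_seq; first by case: ifP => // _; rewrite memN_msupp_eq0.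
move=> x /andP[_ xp]; have /negPf -> : x != m by apply: contraNneq mNp => <-.
by rewrite mulr0; case: ifP.
Qed.

Lemma initial_form_binomial (m1 m2 : 'X_{1..n}) :
  (mdeg m1 < mdeg m2)%N -> initial_form ('X_[m1] - 'X_[m2] : R) = 'X_[m1].
Proof.
move=> lt12; have m12 : m1 != m2 by apply: contraTneq lt12 => ->; rewrite ltnn.
set f : R := _ - _.
have fE m : f@_m = (m1 == m)%:R - (m2 == m)%:R by rewrite mcoeffB !mcoeffX.
have f_m1 : f@_m1 = 1 by rewrite fE eqxx eq_sym (negPf m12) subr0.
have m1f : m1 \in msupp f by rewrite mcoeff_msupp f_m1 oner_neq0.
have low_f : low_deg f = mdeg m1.
  apply/eqP; rewrite eqn_leq low_deg_le //=.
  apply: low_deg_ge; first exact/ltnW/msize_mdeg_lt.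
  by move=> m /msuppB_le; rewrite mem_cat !msuppX !inE => /orP[]/eqP-> //; apply: ltnW.
apply/mpolyP => m; rewrite mcoeff_initial_form low_f mcoeffX fE.
have [<-|m1m] := eqVneq m1 m; first by rewrite eqxx eq_sym (negPf m12) subr0.
have [<-|m2m] := eqVneq m2 m; first by rewrite gtn_eqF.
by rewrite subrr; case: ifP.
Qed.

End Ideals.

Section WeightedOrder.
Variables (K : fieldType) (n : nat) (g : 'I_n -> nat) (b : nat).
Local Notation R := {mpoly K[n]}.

Definition worder_ge (p : R) : Prop := forall m, m \in msupp p -> (b <= wdeg g m)%N.

Lemma worder_ge_ideal : is_ideal worder_ge.
Proof.
split; first by move=> m; rewrite msupp0.
split=> [p q p_ge q_ge m /msuppD_le|c q q_ge m /msuppM_le /allpairsP[[m1 m2] /= [_ m2q ->]]].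
  by rewrite mem_cat => /orP[]; [exact: p_ge|exact: q_ge].
by rewrite wdegD (leq_trans (q_ge _ m2q)) ?leq_addl.
Qed.

Hypothesis g_gt0 : forall i, (0 < g i)%N.

Lemma mcoeffM_worder_ge (c q : R) (E : 'X_{1..n}) :
  worder_ge q -> wdeg g E = b -> (c * q)@_E = c@_0%MM * q@_E.
Proof.
move=> q_ge wE; rewrite -[c in LHS](subrK (c@_0%MM)%:MP) mulrDl mcoeffD mcoeffCM.
rewrite [X in X + _]memN_msupp_eq0 ?add0r //.
apply/negP => /msuppM_le /allpairsP[[m1 m2] /= [m1c m2q E12]].
have m1_neq0 : m1 != 0%MM.
  by apply: contraTneq m1c => ->; rewrite mcoeff_msupp mcoeffB mcoeffC eqxx mulr1 subrr eqxx.
have : (0 < wdeg g m1)%N by rewrite lt0n; apply: contra m1_neq0 => /eqP/wdeg_eq0 ->.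
by rewrite -(ltn_add2r (wdeg g m2)) -wdegD -E12 wE add0n ltnNge q_ge.
Qed.

End WeightedOrder.

Section SemigroupIdeal.
Variables (K : fieldType) (n : nat) (g : 'I_n -> nat).
Local Notation R := {mpoly K[n]}.
Local Notation I_H := (@semigroup_ideal K n g).

Definition tmap (p : R) : {poly K} := mmap (@polyC K) (fun i => 'X^(g i)) p.

Lemma tmapX m : tmap 'X_[m] = 'X^(wdeg g m).
Proof.
rewrite /tmap mmapX /mmap1 /wdeg; under eq_bigr do rewrite -exprM.
by rewrite prodrXr; congr ('X^ _); apply: eq_bigr => i _; rewrite mulnC.
Qed.

Lemma coef_tmap p d : (tmap p)`_d = \sum_(m <- msupp p | wdeg g m == d) p@_m.
Proof.
rewrite {1}(mpolyE p) /tmap rmorph_sum coef_sum [RHS]big_mkcond; apply: eq_bigr => m _.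
by rewrite /= mmapZ -/(tmap _) tmapX coefCM coefXn eq_sym; case: eqP; rewrite ?mulr1 ?mulr0.
Qed.

Lemma semigroup_idealP p :
  I_H p <-> forall d, \sum_(m <- msupp p | wdeg g m == d) p@_m = 0.
Proof.
split=> [Ip d|fibre0]; first by rewrite -coef_tmap [tmap p]Ip coef0.
by apply/polyP => d; rewrite coef_tmap fibre0 coef0.
Qed.

Lemma semigroup_ideal_prime : is_prime I_H.
Proof. exact: (is_prime_kernel (mmap (@polyC K) (fun i => 'X^(g i)))). Qed.

Lemma semigroup_ideal_binomial (m1 m2 : 'X_{1..n}) :
  wdeg g m1 = wdeg g m2 -> I_H ('X_[m1] - 'X_[m2]).
Proof. by move=> w12; rewrite /semigroup_ideal rmorphB /= -!/(tmap _) !tmapX w12 subrr. Qed.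

Lemma semigroup_ideal_monomial m : ~ I_H 'X_[m].
Proof.
by rewrite /semigroup_ideal -/(tmap _) tmapX => /eqP; rewrite -size_poly_eq0 size_polyXn.
Qed.

Lemma semigroup_ideal_worder_ge b :
  (forall u v : 'X_{1..n}, wdeg g u = wdeg g v -> u != v -> (b <= wdeg g u)%N) ->
  forall p, I_H p -> worder_ge g b p.
Proof.
move=> collision p /semigroup_idealP fibre0 m mp; apply: contraTT isT; rewrite -ltnNge => lt_b.
have := fibre0 (wdeg g m); rewrite big_mkcond (bigD1_seq m) ?msupp_uniq //= eqxx big1 ?addr0.
  by move/eqP; rewrite mcoeff_eq0 mp.
move=> m' m'm; case: eqP => // w_eq.
by have := collision _ _ w_eq m'm; rewrite w_eq leqNgt lt_b.
Qed.

End SemigroupIdeal.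

Lemma exists_linear_relation (K : fieldType) (U V : finType) (f : U -> V -> K) :
  (#|V| < #|U|)%N -> exists2 c : U -> K, exists u, c u != 0 &
    forall v, \sum_u c u * f u v = 0.
Proof.
move=> VU; pose M := \matrix_(i < #|U|, j < #|V|) f (enum_val i) (enum_val j).
have : kermx M != 0.
  rewrite -mxrank_eq0 mxrank_ker subn_eq0 -ltnNge.
  exact: leq_ltn_trans (rank_leq_col M) VU.
case/matrix0Pn=> i [j kerM_ij]; pose r := row i (kermx M).
have rM : r *m M = 0 by rewrite /r -row_mul mulmx_ker row0.
exists (fun u => r 0 (enum_rank u)); first by exists (enum_val j); rewrite enum_valK mxE.
move=> v; transitivity ((r *m M) 0 (enum_rank v)); last by rewrite rM mxE.
rewrite mxE (reindex (fun j : 'I_#|U| => enum_val j)) /=; last exact/onW_bij/enum_val_bij.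
by apply: eq_bigr => k _; rewrite enum_valK /M !mxE enum_rankK.
Qed.

Section AlgebraicDependence.
Variables (K : fieldType) (N : nat).
Local Notation R := {mpoly K[N]}.

Lemma msizeM_leq (p q : R) : (msize (p * q) <= msize p + msize q)%N.
Proof.
have [->|p0] := eqVneq p 0; first by rewrite mul0r msize0.
have [->|q0] := eqVneq q 0; first by rewrite mulr0 msize0.
by rewrite msizeM // leq_pred.
Qed.

Lemma msize_prod_leq (I : Type) (r : seq I) (F : I -> R) :
  (msize (\prod_(i <- r) F i) <= \sum_(i <- r) msize (F i) + 1)%N.
Proof.
elim: r => [|x r IHr]; first by rewrite !big_nil msize1.
by rewrite !big_cons -addnA (leq_trans (msizeM_leq _ _)) // leq_add2l.
Qed.

Lemma msizeX_leq (p : R) k : (msize (p ^+ k) <= k * msize p + 1)%N.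
Proof.
elim: k => [|k IHk]; first by rewrite expr0 msize1.
by rewrite exprS (leq_trans (msizeM_leq _ _)) // mulSn -addnA leq_add2l.
Qed.

Definition ymon (y : 'I_N.+1 -> R) (t : 'I_N.+1 -> nat) : R := \prod_(k < N.+1) y k ^+ t k.

(* For large [D], the [D ^ N.+1] products [ymon y t] with exponents below [D]
   outnumber the monomials of degree below their common size bound [B]. *)
Lemma algebraic_dependence (y : 'I_N.+1 -> R) :
  exists D, exists2 c : {ffun 'I_N.+1 -> 'I_D} -> K,
    exists t, c t != 0 & \sum_t c t *: ymon y (fun k => t k) = 0.
Proof.
pose e := \max_(k < N.+1) msize (y k).
pose D := ((N.+1 * e.+1).+1 ^ N).+1; pose B := (D * (N.+1 * e.+1).+1)%N.
have ymon_B (t : {ffun 'I_N.+1 -> 'I_D}) : (msize (ymon y (fun k => t k)) <= B)%N.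
  rewrite /ymon; apply: leq_trans; first exact: msize_prod_leq.
  have -> : B = (\sum_(k < N.+1) D * e.+1 + D)%N.
    by rewrite sum_nat_const card_ord /B; nia.
  apply: leq_add => //; apply: leq_sum => k _; apply: leq_trans (msizeX_leq _ _) _.
  have : (msize (y k) <= e)%N by apply: leq_bigmax.
  by have : (t k < D)%N := ltn_ord (t k); nia.
pose mon (v : {ffun 'I_N -> 'I_B}) : 'X_{1..N} := [multinom (v i : nat) | i < N].
have [|c [t ct] rel] := @exists_linear_relation K {ffun 'I_N.+1 -> 'I_D}
    {ffun 'I_N -> 'I_B} (fun t v => (ymon y (fun k => t k))@_(mon v)).
  rewrite !card_ffun !card_ord /B expnMn expnS mulnC ltn_pmul2r //.
  by rewrite expn_gt0.
exists D, c; first by exists t.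
apply/mpolyP => mu; rewrite mcoeff0 raddf_sum /=; under eq_bigr do rewrite mcoeffZ.
have [mu_ge|mu_lt] := leqP B (mdeg mu).
  rewrite big1 // => u _; rewrite memN_msupp_eq0 ?mulr0 //.
  exact/msize_mdeg_ge/(leq_trans (ymon_B u)).
have mu_B k : (mu k < B)%N.
  by apply: leq_ltn_trans mu_lt; rewrite mdegE (bigD1 k) //= leq_addr.
have -> : mu = mon [ffun k => Ordinal (mu_B k)] by apply/mnmP => k; rewrite mnmE ffunE.
exact: rel.
Qed.

End AlgebraicDependence.

Section PrimeChainRelation.
Variables (K : fieldType) (N : nat).
Local Notation R := {mpoly K[N]}.
Variables (L : nat) (Q : nat -> R -> Prop) (y : 'I_L -> R).
Hypothesis Q_prime : forall i, (i <= L)%N -> is_prime (Q i).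
Hypothesis Q_sub : forall i p, (i < L)%N -> Q i p -> Q i.+1 p.
Hypothesis y_in : forall k : 'I_L, Q k.+1 (y k).
Hypothesis y_notin : forall k : 'I_L, ~ Q k (y k).
Variables (T : finType) (ex : T -> 'I_L -> nat) (c : T -> K).

Definition ytail (i : nat) (t : T) : R := \prod_(k : 'I_L | (i <= k)%N) y k ^+ ex t k.
Definition ysum (i : nat) (A : pred T) : R := \sum_(t | A t) c t *: ytail i t.

Definition ysum_notin (i : nat) : Prop :=
  forall A : pred T,
    (forall t t', A t -> A t' -> (forall k : 'I_L, (i <= k)%N -> ex t k = ex t' k) -> t = t') ->
    (exists2 t, A t & c t != 0) -> ~ Q i (ysum i A).

Lemma prime_expr_notin i (z : R) e : (i <= L)%N -> ~ Q i z -> ~ Q i (z ^+ e).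
Proof.
move=> iL Qz; have [_ [Q1 Q_mul]] := Q_prime iL.
by elim: e => [|e IHe]; rewrite ?expr0 // exprS => /Q_mul[].
Qed.

Lemma ysum_notin_L : ysum_notin L.
Proof.
move=> A A_inj [t0 At0 ct0]; have [[_ [_ Q_mulr]] [Q1 _]] := Q_prime (leqnn L).
have ytail_L t : ytail L t = 1 by rewrite /ytail big_pred0 // => k; rewrite leqNgt ltn_ord.
rewrite /ysum (big_pred1 t0) => [|t]; last first.
  by apply/idP/eqP => [At|->//]; apply: A_inj => // k; rewrite leqNgt ltn_ord.
rewrite ytail_L -mul_mpolyC => /(Q_mulr (c t0)^-1%:MP).
by rewrite mulrA -mpolyCM mulVf // mulr1.
Qed.

Lemma ytail_split i (iL : (i < L)%N) t :
  ytail i t = y (Ordinal iL) ^+ ex t (Ordinal iL) * ytail i.+1 t.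
Proof.
rewrite /ytail (bigD1 (Ordinal iL)) //=; congr (_ * _); apply: eq_bigl => k.
by rewrite ltn_neqAle andbC; congr (_ && _); rewrite -val_eqE /= eq_sym.
Qed.

Lemma ysum_factor i (iL : (i < L)%N) (A : pred T) mn :
  (forall t, A t -> c t != 0 -> (mn <= ex t (Ordinal iL))%N) ->
  exists W, ysum i A = y (Ordinal iL) ^+ mn *
    (ysum i.+1 [pred t | A t & ex t (Ordinal iL) == mn] + y (Ordinal iL) * W).
Proof.
set k0 := Ordinal iL => mn_min.
exists (\sum_(t | A t && (ex t k0 != mn)) c t *: (y k0 ^+ (ex t k0 - mn.+1) * ytail i.+1 t)).
rewrite /ysum (bigID (fun t => ex t k0 == mn)) /= mulrDr; congr (_ + _).
  rewrite mulr_sumr; apply: eq_bigr => t /andP[_ /eqP ex_t].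
  by rewrite ytail_split -/k0 ex_t scalerAr.
rewrite !mulr_sumr; apply: eq_bigr => t /andP[At ex_t].
have [->|ct] := eqVneq (c t) 0; first by rewrite !scale0r !mulr0.
have lt_mn : (mn < ex t k0)%N by rewrite ltn_neqAle eq_sym ex_t mn_min.
rewrite ytail_split -/k0 -[in LHS](subnKC lt_mn) addSnnS exprD exprS.
by rewrite -!scalerAr !mulrA.
Qed.

(* If [ysum i A] were in [Q i], then factoring out the least power of [y i], which is
   not in the prime [Q i], would put the terms with that least power in [Q i.+1],
   because [y i] is in [Q i.+1]. *)
Lemma ysum_notin_step i : (i < L)%N -> ysum_notin i.+1 -> ysum_notin i.
Proof.
move=> iL IHi A A_inj [t0 At0 ct0]; set k0 := Ordinal iL.
have Pt0 : A t0 && (c t0 != 0) by rewrite At0 ct0.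
have [tm /andP[Atm ctm] tm_min] :=
  @arg_minnP _ t0 (fun t => A t && (c t != 0)) (fun t => ex t k0) Pt0.
have [W ->] : exists W, ysum i A = y k0 ^+ ex tm k0 *
    (ysum i.+1 [pred t | A t & ex t k0 == ex tm k0] + y k0 * W).
  by apply: ysum_factor => t At ct; apply: tm_min; rewrite At ct.
have [[_ [Q_add Q_mulr]] [_ Q_mul]] := Q_prime (ltnW iL).
move=> /Q_mul[]; first exact: prime_expr_notin (ltnW iL) (@y_notin k0).
have [[_ [Q1_add Q1_mulr]] _] := Q_prime iL.
have Q1_yW : Q i.+1 (y k0 * W) by rewrite mulrC; apply/Q1_mulr/(y_in k0 : Q i.+1 _).
move=> /(Q_sub iL) Q1_sum; apply: (IHi [pred t | A t & ex t k0 == ex tm k0]).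
- move=> t t' /andP[At /eqP e] /andP[At' /eqP e'] eq_ex; apply: A_inj => // k.
  rewrite leq_eqVlt => /predU1P[ik|]; last exact: eq_ex.
  have -> : k = k0 by apply/val_inj; rewrite /= -ik.
  by rewrite e e'.
- by exists tm; rewrite /= ?Atm ?eqxx.
- by rewrite -(addrK (y k0 * W) (ysum _ _)) -mulN1r; apply/Q1_add/Q1_mulr.
Qed.

Lemma prime_chain_relation :
  (forall t t', ex t =1 ex t' -> t = t') -> (exists t, c t != 0) ->
  \sum_t c t *: \prod_(k < L) y k ^+ ex t k != 0.
Proof.
move=> ex_inj [t0 ct0]; apply/eqP => rel.
have ysum0 d : (d <= L)%N -> ysum_notin (L - d).
  elim: d => [|d IHd] dL; first by rewrite subn0; apply: ysum_notin_L.
  have iL : (L - d.+1 < L)%N by rewrite subnS prednK ?subn_gt0 // leq_subr.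
  apply: (ysum_notin_step iL); rewrite subnS prednK ?subn_gt0 //.
  exact/IHd/ltnW.
have := ysum0 L (leqnn L); rewrite subnn => /(_ predT); apply.
- by move=> t t' _ _ eq_ex; apply: ex_inj => k; apply: eq_ex.
- by exists t0.
suff -> : ysum 0 predT = 0 by have [[Q0 _] _] := Q_prime (leq0n L).
by rewrite -rel; apply: eq_bigr => t _; congr (_ *: _); apply: eq_bigl.
Qed.

End PrimeChainRelation.

Section Height.
Variables (K : fieldType) (N : nat).
Local Notation R := {mpoly K[N]}.

Lemma ht_ge_leq_nvar (P : R -> Prop) k : ht_ge P k -> (k <= N)%N.
Proof.
move=> [C [C_prime [C_strict _]]]; rewrite leqNgt; apply/negP => Nk.
have y_ex (i : 'I_N.+1) : exists y, C i.+1 y /\ ~ C i y.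
  by have [_ [p [? ?]]] := C_strict i (leq_trans (ltn_ord i) Nk); exists p.
have [y y_spec] := fin_all_exists y_ex.
have [D [c [t ct] rel]] := algebraic_dependence y.
suff : \sum_t c t *: ymon y (fun i => t i) != 0 by rewrite rel eqxx.
apply: (@prime_chain_relation K N N.+1 C y).
- by move=> i iN; apply: C_prime; apply: leq_trans Nk.
- by move=> i p iN; case: (C_strict i (leq_trans iN Nk)) => sub _; apply: sub.
- by move=> i; case: (y_spec i).
- by move=> i; case: (y_spec i).
- by move=> t1 t2 eq_t; apply/ffunP => i; apply/val_inj/eq_t.
- by exists t.
Qed.

Lemma ht_ge_supset (P Q : R -> Prop) k :
  ht_ge P k -> is_prime Q -> (forall p, P p -> Q p) -> ht_ge Q k.
Proof.
move=> [C [C_prime [C_strict C_P]]] Q_prime PQ.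
exists (fun i => if (i < k)%N then C i else Q); split; [|split].
- by move=> i ik; case: ifP => // _; apply: C_prime.
- move=> i ik; rewrite ik; case: ltnP => [_|ki]; first exact: C_strict.
  have ik1 : i.+1 = k by apply/eqP; rewrite eqn_leq ik.
  have [sub [p [Cp Cp_out]]] := C_strict i ik; rewrite ik1 in sub Cp.
  by split=> [q /sub/C_P/PQ|]; [|exists p; split=> //; apply/PQ/C_P].
- by move=> p; rewrite ltnn.
Qed.

Lemma ht_ge_strict_supset (P Q : R -> Prop) k :
  ht_ge P k -> is_prime Q -> strict_subset P Q -> ht_ge Q k.+1.
Proof.
move=> [C [C_prime [C_strict C_P]]] Q_prime [PQ [q [Qq Pq]]].
exists (fun i => if (i <= k)%N then C i else Q); split; [|split].
- by move=> i ik; case: ifP => [/C_prime|].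
- move=> i ik; rewrite -ltnS ik; case: (ltnP i k) => [ik1|ki]; first exact: C_strict.
  have -> : i = k by apply/eqP; rewrite eqn_leq -ltnS ik.
  by split=> [p /C_P/PQ|]; last by exists q; split=> // /C_P.
- by move=> p; rewrite ltnn.
Qed.

End Height.

Section SemigroupIdealHeight.
Variables (K : fieldType) (n' : nat) (g : 'I_n'.+1 -> nat).
Hypothesis g_gt0 : forall i, (0 < g i)%N.
Local Notation n := n'.+1.
Local Notation R := {mpoly K[n]}.
Local Notation T := {mpoly {poly K}[n]}.
Local Notation I_H := (@semigroup_ideal K n g).

Definition polyC_mpolyC : {rmorphism K -> T} := @mpolyC n {poly K} \o @polyC K.

(* The kernels of the partial substitutions [x_i |-> t ^ g i], [i <= k], form a
   chain of primes ending at [I_H]. *)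
Definition psubst_var (k : nat) (i : 'I_n) : T :=
  if (i <= k)%N then ('X^(g i))%:MP else 'X_i.
Definition psubst (k : nat) (p : R) : T := mmap polyC_mpolyC (psubst_var k) p.

Lemma psubstX k i : psubst k 'X_i = psubst_var k i.
Proof. by rewrite /psubst mmapX mmap1U. Qed.

Lemma psubstB k p q : psubst k (p - q) = psubst k p - psubst k q.
Proof. exact: rmorphB. Qed.

Lemma psubstXn k p e : psubst k (p ^+ e) = psubst k p ^+ e.
Proof. exact: rmorphXn. Qed.

Lemma psubst_last p : psubst n' p = (tmap g p)%:MP.
Proof.
rewrite /psubst /tmap /mmap rmorph_sum; apply: eq_bigr => m _.
rewrite rmorphM rmorph_prod; congr (_ * _); apply: eq_bigr => i _.
by rewrite rmorphXn /psubst_var -ltnS ltn_ord.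
Qed.

Definition psubst_next_var (k : nat) (j : 'I_n) : T :=
  if j == k.+1 :> nat then ('X^(g j))%:MP else 'X_j.

Lemma psubstS k p :
  psubst k.+1 p = mmap (@mpolyC n {poly K}) (psubst_next_var k) (psubst k p).
Proof.
rewrite /psubst [mmap _ (psubst_var k.+1) p]/mmap [mmap _ (psubst_var k) p]/mmap rmorph_sum.
apply: eq_bigr => m _; rewrite rmorphM rmorph_prod; congr (_ * _); first exact/esym/mmapC.
apply: eq_bigr => i _; rewrite rmorphXn /psubst_var; congr (_ ^+ _).
have [ik|ki] := leqP i k; first by rewrite (leq_trans ik) //; apply/esym/mmapC.
apply/esym/etrans; first exact: (mmapX _ _ U_(i)).
rewrite mmap1U /psubst_next_var; case: eqP => [->|ik1]; first by rewrite leqnn.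
by rewrite leqNgt ltn_neqAle eq_sym ki; move/eqP: ik1 => ->.
Qed.

Lemma psubst_eq0S k p : psubst k p = 0 -> psubst k.+1 p = 0.
Proof. by rewrite psubstS => ->; rewrite rmorph0. Qed.

Lemma psubst_strict k : (k < n')%N -> exists p, psubst k.+1 p = 0 /\ psubst k p != 0.
Proof.
move=> kn; pose j : 'I_n := inord k.+1; pose z : 'I_n := ord0.
have jE : (j : nat) = k.+1 by rewrite inordK.
exists ('X_j ^+ g z - 'X_z ^+ g j : R).
rewrite !psubstB !psubstXn !psubstX /psubst_var jE leqnn ltnn /=.
split; first by rewrite -!rmorphXn -!exprM mulnC subrr.
apply/eqP => /mpolyP /(_ (U_(j) *+ g z)%MM).
rewrite mcoeffB mpolyXn mcoeffX eqxx -rmorphXn mcoeffC mcoeff0.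
have /negPf -> : (U_(j) *+ g z)%MM != 0%MM.
  apply/eqP => /mnmP /(_ j); rewrite mulmnE mnm1E eqxx mnm0E mul1n.
  by move=> gz0; have := g_gt0 z; rewrite gz0.
by rewrite mulr0 subr0 => /eqP; rewrite oner_eq0.
Qed.

Definition psubst_kernel (k : nat) (p : R) : Prop := psubst (minn k n') p = 0.

Lemma psubst_kernel_prime k : is_prime (psubst_kernel k).
Proof. exact: (is_prime_kernel (mmap polyC_mpolyC (psubst_var (minn k n')))). Qed.

Lemma psubst_kernel_last p : psubst_kernel n' p <-> I_H p.
Proof.
rewrite /psubst_kernel minnn psubst_last /semigroup_ideal -/(tmap g p).
by split=> [/eqP|->]; [rewrite mpolyC_eq0 => /eqP|rewrite mpolyC0].
Qed.

Lemma psubst_kernel_strict k :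
  (k < n')%N -> strict_subset (psubst_kernel k) (psubst_kernel k.+1).
Proof.
move=> kn; rewrite /psubst_kernel !(minn_idPl _) ?(ltnW kn) //.
split=> [p|]; first exact: psubst_eq0S.
by have [p [p1 p0]] := psubst_strict kn; exists p; split=> // /eqP; rewrite (negPf p0).
Qed.

Lemma ht_ge_semigroup_ideal : ht_ge I_H n'.
Proof.
exists psubst_kernel; split=> [i _|]; first exact: psubst_kernel_prime.
by split=> [i|]; [exact: psubst_kernel_strict|exact: psubst_kernel_last].
Qed.

Lemma semigroup_ideal_mcoeff0 p : I_H p -> p@_0%MM = 0.
Proof.
move/semigroup_idealP/(_ 0%N); rewrite (eq_bigl (pred1 0%MM)) => [|m]; last first.
  by apply/eqP/eqP => [/wdeg_eq0 -> //|->]; rewrite wdeg0.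
have [p0|/memN_msupp_eq0 //] := boolP (0%MM \in msupp p).
by rewrite -big_filter filter_pred1_uniq ?msupp_uniq // big_seq1.
Qed.

Definition const_free (p : R) : Prop := p@_0%MM = 0.

Lemma const_free_prime : is_prime const_free.
Proof. exact: (is_prime_kernel (mcoeff 0%MM : {rmorphism R -> K})). Qed.

Lemma semigroup_ideal_lt_const_free : strict_subset I_H const_free.
Proof.
split=> [p|]; first exact: semigroup_ideal_mcoeff0.
exists 'X_(ord0 : 'I_n); split; last exact: semigroup_ideal_monomial.
rewrite /const_free mcoeffX; case: eqP => // /mnmP /(_ ord0).
by rewrite mnm1E eqxx mnm0E.
Qed.

Lemma ideal_height_semigroup_ideal : ideal_height I_H n'.
Proof.
split=> [|P P_prime IP]; last exact: ht_ge_supset ht_ge_semigroup_ideal P_prime IP.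
exists I_H; split; first exact: semigroup_ideal_prime.
split=> //; split=> [|ht_n]; first exact: ht_ge_semigroup_ideal.
have := ht_ge_strict_supset ht_n const_free_prime semigroup_ideal_lt_const_free.
by move/ht_ge_leq_nvar; rewrite ltnn.
Qed.

End SemigroupIdealHeight.

Section PowerMonomials.
Variables (n : nat) (a : 'I_n -> nat).
Hypothesis a_gt1 : forall i, (1 < a i)%N.

Definition apow (i : 'I_n) : 'X_{1..n} := (U_(i) *+ a i)%MM.

Lemma wdeg_apow i : wdeg (sgen a) (apow i) = prodA a.
Proof. by rewrite wdegMn wdegU mulnC mul_a_sgen. Qed.

Lemma mdeg_apow i : mdeg (apow i) = a i.
Proof. by rewrite mdegMn mdeg1 mul1n. Qed.

Lemma apow_eq i j : (apow i == apow j) = (i == j).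
Proof.
apply/eqP/eqP => [/mnmP/(_ i)|->] //; rewrite !mulmnE !mnm1E eqxx mul1n.
case: eqP => [->//|_]; rewrite mul0n => ai0.
by have := a_gt0 a_gt1 i; rewrite ai0.
Qed.

End PowerMonomials.

Section BinomialGenerators.
Variables (K : fieldType) (n' : nat) (a : 'I_n'.+1 -> nat).
Hypothesis a_gt1 : forall i, (1 < a i)%N.
Hypothesis a_coprime : forall i j, i != j -> coprime (a i) (a j).
Local Notation n := n'.+1.
Local Notation R := {mpoly K[n]}.
Local Notation w := (wdeg (sgen a)).
Local Notation I_H := (@semigroup_ideal K n (sgen a)).
Local Notation wj := (widen_ord (leqnSn n')).

Definition binom (j : 'I_n') : R := 'X_[apow a (wj j)] - 'X_[apow a ord_max].

Lemma semigroup_ideal_binom j : I_H (binom j).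
Proof. by apply: semigroup_ideal_binomial; rewrite !(wdeg_apow a_gt1). Qed.

Definition binom_span (p : R) : Prop := exists c : 'I_n' -> R, p = \sum_j c j * binom j.

Lemma binom_span_ideal : is_ideal binom_span.
Proof.
split; first by exists (fun=> 0); rewrite big1 // => j _; rewrite mul0r.
split=> [_ _ [c ->] [d ->]|e _ [c ->]].
  by exists (fun j => c j + d j); rewrite -big_split; apply: eq_bigr => j _; rewrite mulrDl.
by exists (fun j => e * c j); rewrite mulr_sumr; apply: eq_bigr => j _; rewrite mulrA.
Qed.

Lemma binom_span_binom j : binom_span (binom j).
Proof.
exists (fun k => (k == j)%:R); rewrite (bigD1 j) //= eqxx mul1r big1 ?addr0 //.
by move=> k /negPf ->; rewrite mul0r.
Qed.

Definition binom_eqv (x y : R) : Prop := binom_span (x - y).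

Lemma binom_eqv_refl x : binom_eqv x x.
Proof. by rewrite /binom_eqv subrr; case: binom_span_ideal. Qed.

Lemma binom_eqvM x1 x2 y1 y2 :
  binom_eqv x1 y1 -> binom_eqv x2 y2 -> binom_eqv (x1 * x2) (y1 * y2).
Proof.
have [_ [span_add span_mul]] := binom_span_ideal.
move=> e1 e2; rewrite /binom_eqv.
have -> : x1 * x2 - y1 * y2 = x2 * (x1 - y1) + y1 * (x2 - y2).
  by rewrite !mulrBr [x2 * x1]mulrC [x2 * y1]mulrC addrA subrK.
by apply: span_add; apply: span_mul.
Qed.

Lemma binom_eqv_prod (I : Type) (r : seq I) (F G : I -> R) :
  (forall i, binom_eqv (F i) (G i)) -> binom_eqv (\prod_(i <- r) F i) (\prod_(i <- r) G i).
Proof.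
move=> FG; elim: r => [|x r IHr]; first by rewrite !big_nil; apply: binom_eqv_refl.
by rewrite !big_cons; apply: binom_eqvM.
Qed.

Lemma binom_eqvX x y e : binom_eqv x y -> binom_eqv (x ^+ e) (y ^+ e).
Proof.
move=> xy; elim: e => [|e IHe]; first by rewrite !expr0; apply: binom_eqv_refl.
by rewrite !exprS; apply: binom_eqvM.
Qed.

(* Every monomial is equivalent to a reduced one, obtained by trading each
   [x_j ^ a_j] (j < n') for [x_n ^ a_n]. *)
Definition mquot (m : 'X_{1..n}) (j : 'I_n') : nat := m (wj j) %/ a (wj j).
Definition mrem (m : 'X_{1..n}) : 'X_{1..n} :=
  [multinom if i == ord_max then m i else m i %% a i | i < n].
Definition mreduce (m : 'X_{1..n}) : 'X_{1..n} :=
  (mrem m + \sum_(j < n') apow a ord_max *+ mquot m j)%MM.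
Definition mreduced (m : 'X_{1..n}) : bool := [forall j : 'I_n', (m (wj j) < a (wj j))%N].

Lemma wj_neq_max (j : 'I_n') : wj j != ord_max.
Proof. by rewrite -val_eqE /= neq_ltn ltn_ord. Qed.

Lemma mrem_decomp m : m = (mrem m + \sum_(j < n') apow a (wj j) *+ mquot m j)%MM.
Proof.
apply/mnmP => i; rewrite mnmDE mnm_sumE /mrem mnmE.
have [->|i_max] := eqVneq i ord_max.
  by rewrite big1 ?addn0 // => j _; rewrite !mulmnE mnm1E (negPf (wj_neq_max j)).
have i_lt : (i < n')%N by rewrite ltn_neqAle -ltnS ltn_ord andbT -val_eqE in i_max *.
have wj_i : wj (Ordinal i_lt) = i by apply/val_inj.
rewrite (bigD1 (Ordinal i_lt)) //= big1 ?addn0.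
  by rewrite !mulmnE mnm1E /mquot wj_i eqxx mul1n addnC mulnC -divn_eq.
move=> j ji; rewrite !mulmnE mnm1E; case: eqP => [ji'|]; last by rewrite mul0n.
by case/eqP: ji; apply/val_inj; move/(congr1 val): ji'.
Qed.

Lemma mreduce_reduced m : mreduced (mreduce m).
Proof.
apply/forallP => j; rewrite mnmDE mnm_sumE big1 => [|k _]; last first.
  by rewrite !mulmnE mnm1E eq_sym (negPf (wj_neq_max j)) mul0n.
by rewrite addn0 /mrem mnmE (negPf (wj_neq_max j)) ltn_pmod ?a_gt0.
Qed.

Lemma wdeg_mreduce m : w (mreduce m) = w m.
Proof.
rewrite {2}(mrem_decomp m) /mreduce !wdegD !wdeg_sum; congr (_ + _)%N.
by apply: eq_bigr => j _; rewrite !wdegMn !wdegU ![(sgen a _ * a _)%N]mulnC !(mul_a_sgen a_gt1).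
Qed.

Lemma mreduced_inj u v : mreduced u -> mreduced v -> w u = w v -> u = v.
Proof.
move=> /forallP u_red /forallP v_red uv.
have u_v (j : 'I_n') : u (wj j) = v (wj j).
  by have := eq_wdeg_mod_a a_gt1 a_coprime (wj j) uv; rewrite !modn_small.
apply/mnmP => i; case: (unliftP ord_max i) => [j ->|->].
  by have -> : lift ord_max j = wj j by apply/val_inj; rewrite /= /bump leqNgt ltn_ord.
move: uv; rewrite /wdeg !big_ord_recr /= (eq_bigr _ (fun j _ => congr1 (muln^~ _) (u_v j))).
by move/addnI/eqP; rewrite eqn_pmul2r ?sgen_gt0 // => /eqP.
Qed.

Lemma binom_eqv_mreduce m : binom_eqv 'X_[m] 'X_[mreduce m].
Proof.
rewrite {1}(mrem_decomp m) /mreduce !mpolyXD -!mprodXE.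
apply: binom_eqvM; first exact: binom_eqv_refl.
apply: binom_eqv_prod => j.
rewrite -(@mpolyXn _ _ (apow a (wj j))) -(@mpolyXn _ _ (apow a ord_max)).
exact/binom_eqvX/binom_span_binom.
Qed.

Definition nform (p : R) : R := \sum_(m <- msupp p) p@_m *: 'X_[mreduce m].

Lemma binom_eqv_nform p : binom_eqv p (nform p).
Proof.
rewrite /binom_eqv {1}(mpolyE p) /nform -sumrB; apply: ideal_sum; first exact: binom_span_ideal.
move=> m; rewrite -scalerBr -mul_mpolyC; have [_ [_ span_mul]] := binom_span_ideal.
exact/span_mul/binom_eqv_mreduce.
Qed.

Lemma nform_eq0 p : I_H p -> nform p = 0.
Proof.
move=> /semigroup_idealP fibre0; apply/mpolyP => mu; rewrite mcoeff0 /nform raddf_sum /=.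
under eq_bigr do rewrite mcoeffZ mcoeffX.
have [mu_red|mu_nred] := boolP (mreduced mu); last first.
  rewrite big1 // => m _; case: eqP => [mu_m|]; last by rewrite mulr0.
  by move: mu_nred; rewrite -mu_m mreduce_reduced.
rewrite -[RHS](fibre0 (w mu)) [RHS]big_mkcond; apply: eq_bigr => m _.
have -> : (mreduce m == mu) = (w m == w mu).
  apply/eqP/eqP => [<-|wm]; first by rewrite wdeg_mreduce.
  by apply: mreduced_inj; rewrite ?mreduce_reduced ?wdeg_mreduce.
by case: ifP; rewrite ?mulr1 ?mulr0.
Qed.

Lemma semigroup_ideal_binom_span p : I_H p -> binom_span p.
Proof. by move=> Ip; have := binom_eqv_nform p; rewrite /binom_eqv nform_eq0 // subr0. Qed.

Definition binoms : seq R := [seq binom j | j <- enum 'I_n'].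

Lemma generates_binoms : generates (fun q => q \in binoms) I_H.
Proof.
move=> p; split.
  apply: gen_ideal_min; first by case: (semigroup_ideal_prime K (sgen a)).
  by move=> q /mapP[j _ ->]; apply: semigroup_ideal_binom.
move=> /semigroup_ideal_binom_span[c ->]; apply: gen_ideal_comb => j.
exact/map_f/mem_enum.
Qed.

End BinomialGenerators.

Section LowWeight.
Variables (K : fieldType) (n : nat) (a : 'I_n -> nat).
Hypothesis a_gt1 : forall i, (1 < a i)%N.
Hypothesis a_coprime : forall i j, i != j -> coprime (a i) (a j).
Local Notation I_H := (@semigroup_ideal K n (sgen a)).
Local Notation high := (worder_ge (sgen a) (prodA a)).

Lemma semigroup_ideal_high p : I_H p -> high p.
Proof. exact/semigroup_ideal_worder_ge/wdeg_collision. Qed.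

Lemma initial_ideal_high p : @initial_ideal K n (sgen a) p -> high p.
Proof.
apply: gen_ideal_min; first exact: worder_ge_ideal.
move=> _ [f [If [_ ->]]] m; rewrite mcoeff_msupp mcoeff_initial_form.
by case: ifP => _; [rewrite -mcoeff_msupp; apply: semigroup_ideal_high|rewrite eqxx].
Qed.

End LowWeight.

Section NumberOfGenerators.
Variables (K : fieldType) (n' : nat) (a : 'I_n'.+1 -> nat).
Hypothesis a_gt1 : forall i, (1 < a i)%N.
Hypothesis a_coprime : forall i j, i != j -> coprime (a i) (a j).
Local Notation n := n'.+1.
Local Notation R := {mpoly K[n]}.
Local Notation I_H := (@semigroup_ideal K n (sgen a)).
Local Notation wj := (widen_ord (leqnSn n')).
Local Notation high := (worder_ge (sgen a) (prodA a)).

(* The monomials [x_j ^ a_j] have the least weight [prodA a] occurring in [I_H], so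
   only the constant terms of the multipliers contribute to these coefficients. *)
Definition apow_coefs (q : R) : 'rV[K]_n' := \row_j q@_(apow a (wj j)).
Definition apow_coefs_mx (s : seq R) : 'M[K]_(size s, n') :=
  \matrix_(k < size s, j < n') (s`_k)@_(apow a (wj j)).

Lemma apow_coefs_mem s q : q \in s -> (apow_coefs q <= apow_coefs_mx s)%MS.
Proof.
move=> qs; have qs_lt : (index q s < size s)%N by rewrite index_mem.
have -> : apow_coefs q = row (Ordinal qs_lt) (apow_coefs_mx s).
  by apply/rowP => j; rewrite !mxE /= nth_index.
exact: row_sub.
Qed.

Lemma apow_coefs_gen_ideal s p : (forall q, q \in s -> high q) ->
  gen_ideal (fun q => q \in s) p -> (apow_coefs p <= apow_coefs_mx s)%MS.
Proof.
move=> s_high [t [c [ts [_ ->]]]].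
have -> : apow_coefs (\sum_(i < size t) c`_i * t`_i) =
    \sum_(i < size t) (c`_i)@_0%MM *: apow_coefs t`_i.
  apply/rowP => j; rewrite mxE summxE raddf_sum /=; apply: eq_bigr => i _.
  rewrite !mxE (mcoeffM_worder_ge (b := prodA a) (sgen_gt0 a_gt1)) ?wdeg_apow //.
  exact/s_high/ts/mem_nth.
by apply: summx_sub => i _; apply/scalemx_sub/apow_coefs_mem/ts/mem_nth.
Qed.

Lemma apow_coefs_binom j : apow_coefs (binom K a j) = row j 1%:M.
Proof.
apply/rowP => k; rewrite !mxE mcoeffB !mcoeffX !(apow_eq a_gt1) [ord_max == _]eq_sym.
by rewrite (negPf (wj_neq_max k)) subr0.
Qed.

Lemma generates_size s : generates (fun q => q \in s) I_H -> (n' <= size s)%N.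
Proof.
move=> gen_s; have s_high q : q \in s -> high q.
  by move=> qs; apply/semigroup_ideal_high/gen_s/gen_ideal_mem.
have : (1%:M <= apow_coefs_mx s)%MS.
  apply/row_subP => j; rewrite -apow_coefs_binom; apply: apow_coefs_gen_ideal => //.
  exact/gen_s/semigroup_ideal_binom.
by move/mxrankS; rewrite mxrank1 => /leq_trans; apply; apply: rank_leq_row.
Qed.

Lemma min_num_gens_semigroup_ideal : min_num_gens I_H n'.
Proof.
split; last exact: generates_size.
exists (binoms K a); split; first by rewrite size_map size_enum_ord.
exact: generates_binoms.
Qed.

End NumberOfGenerators.

Section NotQuadratic.
Variables (K : fieldType) (n : nat) (a : 'I_n -> nat).
Hypothesis a_gt1 : forall i, (1 < a i)%N.
Hypothesis a_coprime : forall i j, i != j -> coprime (a i) (a j).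
Local Notation R := {mpoly K[n]}.
Local Notation high := (worder_ge (sgen a) (prodA a)).

Lemma apow_initial_ideal i j :
  (a i < a j)%N -> @initial_ideal K n (sgen a) 'X_[apow a i].
Proof.
move=> lt_ij; have ij : i != j by apply: contraTneq lt_ij => ->; rewrite ltnn.
apply: gen_ideal_mem; exists ('X_[apow a i] - 'X_[apow a j]).
split; first by apply: semigroup_ideal_binomial; rewrite !wdeg_apow.
split; last by rewrite initial_form_binomial // !mdeg_apow.
move/eqP; rewrite subr_eq0 => /eqP/(congr1 (mcoeff (apow a i))).
by rewrite !mcoeffX eqxx apow_eq // eq_sym (negPf ij) => /eqP; rewrite oner_eq0.
Qed.

(* [x_i ^ a_i] could only come from [x_i ^ 2] in a quadratic form, whose weight
   [2 * sgen a i] is below [prodA a] when [a_i > 2]. *)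
Lemma mcoeffM_homog2_apow (c s : R) i :
  (2 < a i)%N -> s \is 2.-homog -> high s -> (c * s)@_(apow a i) = 0.
Proof.
move=> ai_gt2 s2 s_high; apply: memN_msupp_eq0; apply/negP.
move=> /msuppM_le /allpairsP[[m1 m2] /= [_ m2s E12]].
have m2_i k : k != i -> m2 k = 0%N.
  move=> ki; move/mnmP/(_ k): E12; rewrite mnmDE /apow mulmnE mnm1E eq_sym (negPf ki).
  by move/esym/eqP; rewrite mul0n addn_eq0 => /andP[_ /eqP].
have wm2 : wdeg (sgen a) m2 = (m2 i * sgen a i)%N.
  by rewrite /wdeg (bigD1 i) //= big1 ?addn0 // => k /m2_i ->.
have m2i : m2 i = 2%N.
  have /dhomogP deg_s := s2.
  by rewrite -(deg_s _ m2s) /= mdegE (bigD1 i) //= big1 ?addn0.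
have := s_high _ m2s; rewrite wm2 m2i -(mul_a_sgen a_gt1 i) leq_pmul2r ?sgen_gt0 //.
by rewrite leqNgt ai_gt2.
Qed.

Lemma not_quadratic : (2 < n)%N -> ~ quadratic K (sgen a).
Proof.
move=> n_gt2 [S [S2 genS]].
have [i [j /andP[ai_gt2 aij]]] := exists_a_ge3_lt a_gt1 a_coprime n_gt2.
have S_high q : S q -> high q.
  by move=> Sq; apply/(initial_ideal_high a_gt1 a_coprime)/genS/gen_ideal_mem.
have [t [c [tS [_ X_eq]]]] := (genS _).2 (apow_initial_ideal aij).
have := congr1 (mcoeff (apow a i)) X_eq.
rewrite mcoeffX eqxx raddf_sum big1 => [/eqP|k _]; first by rewrite oner_eq0.
have Stk : S t`_k by apply/tS/mem_nth.
exact: mcoeffM_homog2_apow ai_gt2 (S2 _ Stk) (S_high _ Stk).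
Qed.

End NotQuadratic.

Theorem proposition3p5 (K : fieldType) (n : nat) (a : 'I_n -> nat) :
  (2 < n)%N ->
  (forall i, 1 < a i)%N ->
  (forall i j, i != j -> coprime (a i) (a j)) ->
  let P := (\prod_(i < n) a i)%N in
  let g := fun i => (P %/ a i)%N in
  minimal_generating_system g /\
  complete_intersection K g /\ ~ quadratic K g.
Proof.
case: n a => [//|n'] a n_gt2 a_gt1 a_coprime P g.
split; first exact: minimal_generating_system_sgen.
split; last exact: not_quadratic.
exists n'; split; first exact/ideal_height_semigroup_ideal/sgen_gt0.
exact: min_num_gens_semigroup_ideal.
Qed.
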